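(* Let $n\ge 5$ and let $\sigma$ be a maximal simplex of $\Delta_n$ that covers all places, and suppose $|N(w)\cap\sigma|\ge 2$ for all $w\in\sigma$. If there exists $v\in\sigma$ with $|N(v)\cap\sigma|\ge 3$, then $N(v)\subseteq\sigma$.
   Context: $\mathbb{I}_n$ is the $n$-dimensional hypercube graph on vertex set $\{0,1\}^n$ (adjacent iff differing in exactly one coordinate), with Hamming distance $d(v,w)=\#\{i: v(i)\ne w(i)\}$, $v(i)$ the $i$-th coordinate. $\Delta_n=\mathcal{VR}(\mathbb{I}_n;3)$ is the simplicial complex whose simplices are the subsets $\sigma\subseteq\{0,1\}^n$ with $d(x,y)\le 3$ for all $x,y\in\sigma$. A simplex $\sigma$ covers all places if for each $i\in[n]=\{1,\dots,n\}$ there are $v,w\in\sigma$ with $v(i)=1$ and $w(i)=0$. $N(v)$ denotes the set of the $n$ vertices adjacent to $v$ in $\mathbb{I}_n$. *)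

From mathcomp Require Import all_boot.
Set Implicit Arguments. Unset Strict Implicit. Unset Printing Implicit Defensive.

(* Vertices of the hypercube I_n: functions [n] -> {0,1}, coordinates indexed by 'I_n. *)
Definition cube (n : nat) := {ffun 'I_n -> bool}.

Definition hdist n (v w : cube n) : nat := #|[set i | v i != w i]|.

Definition adj n (v w : cube n) : bool := hdist v w == 1.

Definition nbhd n (v : cube n) : {set cube n} := [set w | adj v w].

(* simplices of Delta_n = VR(I_n; 3) *)
Definition is_simplex n (s : {set cube n}) : bool :=
  [forall x in s, forall y in s, hdist x y <= 3].

Definition maximal_simplex n (s : {set cube n}) : bool :=
  is_simplex s && [forall t : {set cube n}, (s \proper t) ==> ~~ is_simplex t].

Definition covers_all_places n (s : {set cube n}) : bool :=
  [forall i : 'I_n, [exists v in s, v i] && [exists w in s, ~~ w i]].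

From mathcomp Require Import all_boot.
From mathcomp Require Import zify.
Set Implicit Arguments. Unset Strict Implicit. Unset Printing Implicit Defensive.

(* If some x in s were at distance
   3 from v, every neighbour of v in s would lie on a geodesic from v to x, so
   these neighbours are exactly the three flips of v in the coordinates where v
   and x differ. A fourth coordinate d exists since n > 3, and covering all
   places gives w in s differing from v at d. The distance constraints to x and
   to the three neighbours force d(v, w) = 2, and then every neighbour of w in s
   other than the flip of w at d would be at distance 2 from v as well, which
   parity forbids: w has a single neighbour in s, a contradiction. Hence s lies
   in the ball of radius 2 about v, each neighbour of v is within distance 3 of
   all of s, and maximality puts it in s. *)

Definition hdiff n (v w : cube n) : {set 'I_n} := [set i | v i != w i].

Definition flip n (v : cube n) (a : 'I_n) : cube n :=
  [ffun i => if i == a then ~~ v i else v i].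

Section Hamming.
Variable n : nat.
Implicit Types (u v w x y : cube n) (a : 'I_n).

Lemma hdistE v w : hdist v w = #|hdiff v w|. Proof. by []. Qed.

Lemma hdistC v w : hdist v w = hdist w v.
Proof. by apply: eq_card => i; rewrite !inE eq_sym. Qed.

Lemma hdistvv v : hdist v v = 0.
Proof. by apply: eq_card0 => i; rewrite !inE eqxx. Qed.

Lemma hdiff_via v x y :
  hdiff x y = (hdiff v x :|: hdiff v y) :\: (hdiff v x :&: hdiff v y).
Proof. by apply/setP=> i; rewrite !inE; case: (v i); case: (x i); case: (y i). Qed.

Lemma hdist_via v x y :
  hdist x y + 2 * #|hdiff v x :&: hdiff v y| = hdist v x + hdist v y.
Proof.
have sub : hdiff v x :&: hdiff v y \subset hdiff v x :|: hdiff v y.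
  exact: subset_trans (subsetIl _ _) (subsetUl _ _).
rewrite !hdistE (hdiff_via v) cardsDS // -cardsUI.
have := subset_leq_card sub; lia.
Qed.

Lemma hdist_triangle v x y : hdist x y <= hdist x v + hdist v y.
Proof. by have := hdist_via v x y; rewrite (hdistC x v); lia. Qed.

Lemma hdiff_flip v a : hdiff v (flip v a) = [set a].
Proof.
by apply/setP=> i; rewrite !inE ffunE; case: (eqVneq i a) => //; case: (v i).
Qed.

Lemma flip_inj v : injective (flip v).
Proof. by move=> a b eq_ab; apply/set1_inj; rewrite -(hdiff_flip v a) -(hdiff_flip v b) eq_ab. Qed.

Lemma hdist_flip v y a :
  hdist (flip v a) y = if a \in hdiff v y then (hdist v y).-1 else (hdist v y).+1.
Proof.
have flipE i : (i \in hdiff (flip v a) y) =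
    if i == a then a \notin hdiff v y else i \in hdiff v y.
  by rewrite !inE ffunE; case: (eqVneq i a) => [->|//]; case: (v a); case: (y a).
rewrite !hdistE; case: ifP => aD.
  rewrite (cardsD1 a (hdiff v y)) aD; apply: eq_card => i.
  by rewrite flipE in_setD1; case: (eqVneq i a) => [->|]; rewrite ?aD ?eqxx.
have -> : #|hdiff v y|.+1 = (a \notin hdiff v y) + #|hdiff v y| by rewrite aD.
rewrite -cardsU1; apply: eq_card => i.
by rewrite flipE in_setU1; case: (eqVneq i a) => [->|]; rewrite ?aD ?eqxx.
Qed.

Lemma nbhdE v : nbhd v = [set flip v a | a : 'I_n].
Proof.
apply/setP=> u; rewrite inE /adj hdistE; apply/cards1P/imsetP => [[a ua]|[a _ ->]].
  exists a => //; apply/ffunP=> i; rewrite ffunE.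
  have : (i \in hdiff v u) = (i == a) by rewrite ua inE.
  by rewrite inE; case: (i == a); case: (v i); case: (u i).
by exists a; rewrite hdiff_flip.
Qed.

End Hamming.

Section Simplex.
Variables (n : nat) (s : {set cube n}).

Lemma simplex_hdist x y : is_simplex s -> x \in s -> y \in s -> hdist x y <= 3.
Proof. by move=> /forall_inP s_simplex xs ys; apply: (forall_inP (s_simplex x xs)). Qed.

Lemma maximal_simplex_mem u :
  maximal_simplex s -> (forall x, x \in s -> hdist u x <= 3) -> u \in s.
Proof.
case/andP=> s_simplex /forallP s_max u_close; apply: contraT => us.
suff ut : is_simplex (u |: s).
  have s_ut : s \proper u |: s by rewrite properUr ?sub1set.
  by move: (implyP (s_max _) s_ut); rewrite ut.
apply/forall_inP => x /setU1P[-> | xs]; apply/forall_inP => y /setU1P[-> | ys].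
- by rewrite hdistvv.
- exact: u_close.
- by rewrite hdistC u_close.
- exact: simplex_hdist.
Qed.

End Simplex.

Section FarVertex.
Variables (n : nat) (s : {set cube n}) (v x : cube n).
Hypotheses (s_simplex : is_simplex s) (vs : v \in s) (xs : x \in s).
Hypotheses (far : hdist v x = 3) (deg_v : 3 <= #|nbhd v :&: s|).

Lemma flip_mem_far a : flip v a \in s -> a \in hdiff v x.
Proof.
move=> fs; apply: contraLR (simplex_hdist s_simplex fs xs) => aD.
by rewrite hdist_flip (negbTE aD) far.
Qed.

Lemma nbhd_far : nbhd v :&: s = flip v @: hdiff v x.
Proof.
have sub : nbhd v :&: s \subset flip v @: hdiff v x.
  apply/subsetP => u /setIP[]; rewrite nbhdE => /imsetP[a _ ->] fs.
  exact/imset_f/flip_mem_far.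
apply/eqP; rewrite eqEcard sub card_imset; last exact: flip_inj.
by rewrite -hdistE far.
Qed.

Lemma flip_far_mem a : a \in hdiff v x -> flip v a \in s.
Proof.
by move=> aD; have /setIP[] : flip v a \in nbhd v :&: s by rewrite nbhd_far imset_f.
Qed.

Lemma hdist_across y d :
  y \in s -> d \notin hdiff v x -> d \in hdiff v y -> hdist v y = 2.
Proof.
move=> ys dx dy.
have vy_le3 := simplex_hdist s_simplex vs ys.
have := hdist_via v y x; rewrite far.
have yx_le3 := simplex_hdist s_simplex ys xs.
have yIx_lt : #|hdiff v y :&: hdiff v x| < hdist v y.
  apply: proper_card; rewrite properIl //; apply/subsetPn; by exists d.
case: (eqVneq (hdist v y) 3) => [vy3 | ]; last by lia.
have /subsetPn[a ax ay] : ~~ (hdiff v x \subset hdiff v y).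
  by apply/negP => /setIidPr xy; move: yIx_lt; rewrite xy -hdistE far vy3.
have := simplex_hdist s_simplex (flip_far_mem ax) ys.
by rewrite hdist_flip (negbTE ay) vy3.
Qed.

Hypotheses (s_covers : covers_all_places s) (n_gt3 : 3 < n).
Hypothesis deg_s : forall w, w \in s -> 2 <= #|nbhd w :&: s|.

Lemma far_vertex_absurd : False.
Proof.
have /subsetPn[d _ dx] : ~~ ([set: 'I_n] \subset hdiff v x).
  by apply/negP => /subset_leq_card; rewrite cardsT card_ord -hdistE far; lia.
have [w ws dw] : exists2 w, w \in s & d \in hdiff v w.
  have /andP[/exists_inP[w1 w1s w1d] /exists_inP[w0 w0s w0d]] := forallP s_covers d.
  by case vd: (v d); [exists w0 | exists w1]; rewrite // inE vd ?w1d ?(negbTE w0d).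
have vw2 := hdist_across ws dx dw.
have : nbhd w :&: s \subset [set flip w d].
  apply/subsetP => u /setIP[]; rewrite nbhdE => /imsetP[z _ ->] zs.
  rewrite inE; case: (eqVneq z d) => [-> // | zd]; exfalso.
  have dz : d \in hdiff v (flip w z) by move: dw; rewrite !inE ffunE ifN_eqC.
  have := hdist_across zs dx dz; rewrite hdistC hdist_flip hdistC vw2.
  by case: ifP.
by move/subset_leq_card; rewrite cards1; have := deg_s ws; lia.
Qed.

End FarVertex.

Lemma simplex_hdist_le2 n (s : {set cube n}) v :
  3 < n -> is_simplex s -> covers_all_places s ->
  (forall w, w \in s -> 2 <= #|nbhd w :&: s|) ->
  v \in s -> 3 <= #|nbhd v :&: s| -> forall x, x \in s -> hdist v x <= 2.
Proof.
move=> n_gt3 s_simplex s_covers deg_s vs deg_v x xs; rewrite leqNgt; apply/negP => vx.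
have far : hdist v x = 3 by have := simplex_hdist s_simplex vs xs; lia.
exact: (far_vertex_absurd s_simplex vs xs far deg_v s_covers n_gt3 deg_s).
Qed.

Theorem mainTheorem10 (n : nat) (s : {set cube n}) :
  5 <= n ->
  maximal_simplex s ->
  covers_all_places s ->
  (forall w, w \in s -> 2 <= #|nbhd w :&: s|) ->
  forall v, v \in s -> 3 <= #|nbhd v :&: s| -> nbhd v \subset s.
Proof.
move=> n_ge5 s_max s_covers deg_s v vs deg_v.
have s_simplex : is_simplex s by case/andP: s_max.
have n_gt3 : 3 < n by lia.
apply/subsetP => u uv; apply: (maximal_simplex_mem s_max) => x xs.
have vx_le2 := simplex_hdist_le2 n_gt3 s_simplex s_covers deg_s vs deg_v xs.
have := hdist_triangle v u x; move: uv; rewrite inE /adj hdistC => /eqP; lia.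
Qed.
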